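(* Let $X$ be a space, $A\subset X$ and $x\in \operatorname{int}A$, and suppose the boundary $\partial A$ is a C-set in $X$. Then there is a clopen set $C\subset X$ with $x\in C$ and $C\cap\partial A=\varnothing$, and $C\cap\operatorname{int}A=C\cap\overline A$ is clopen in $X$. Consequently a space is rim-C (has a basis of open sets whose boundaries are C-sets) if and only if it is zero-dimensional.
   Context: All spaces are separable and metrizable. A subset $A$ of a space $X$ is a C-set in $X$ if $A$ is an intersection of clopen subsets of $X$ (the empty set counts as a C-set). *)

From Stdlib Require Import Reals.
Open Scope R_scope.

Record TopSpace := {
  carrier :> Type;
  is_open : (carrier -> Prop) -> Prop;
  open_full : is_open (fun _ => True);
  open_inter : forall U V, is_open U -> is_open V -> is_open (fun x => U x /\ V x);
  open_union : forall F : (carrier -> Prop) -> Prop,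
      (forall U, F U -> is_open U) -> is_open (fun x => exists U, F U /\ U x)
}.

Section Topo.
Variable X : TopSpace.

Definition is_closed (A : X -> Prop) : Prop := is_open X (fun x => ~ A x).
Definition is_clopen (A : X -> Prop) : Prop := is_open X A /\ is_closed A.

Definition interior (A : X -> Prop) : X -> Prop :=
  fun x => exists U, is_open X U /\ (forall y, U y -> A y) /\ U x.
Definition closure (A : X -> Prop) : X -> Prop :=
  fun x => forall U, is_open X U -> U x -> exists y, U y /\ A y.
Definition boundary (A : X -> Prop) : X -> Prop :=
  fun x => closure A x /\ ~ interior A x.

(* A is a C-set: an intersection of a family of clopen subsets of X
   (the empty set is allowed, being itself clopen). *)
Definition is_Cset (A : X -> Prop) : Prop :=
  exists F : (X -> Prop) -> Prop,
    (forall C, F C -> is_clopen C) /\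
    (forall x, A x <-> (forall C, F C -> C x)).

Definition is_basis (B : (X -> Prop) -> Prop) : Prop :=
  (forall V, B V -> is_open X V) /\
  (forall U x, is_open X U -> U x -> exists V, B V /\ V x /\ (forall y, V y -> U y)).

Definition rim_C : Prop :=
  exists B, is_basis B /\ (forall V, B V -> is_Cset (boundary V)).

Definition zero_dimensional : Prop :=
  exists B, is_basis B /\ (forall V, B V -> is_clopen V).

Definition metrizable : Prop :=
  exists d : X -> X -> R,
    (forall x y, 0 <= d x y) /\
    (forall x y, d x y = 0 <-> x = y) /\
    (forall x y, d x y = d y x) /\
    (forall x y z, d x z <= d x y + d y z) /\
    (forall U, is_open X U <->
       (forall x, U x -> exists eps, 0 < eps /\ (forall y, d x y < eps -> U y))).

Definition separable : Prop :=
  exists D : X -> Prop,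
    (exists f : nat -> option X, forall x, D x -> exists n, f n = Some x) /\
    (forall x, closure D x).

End Topo.

(* Since [x] lies in the interior of [A], it is not a boundary point, so one of the clopen sets
   whose intersection is the boundary misses [x]; its complement [C] is a clopen neighbourhood
   of [x] disjoint from the boundary. On [C] the closure and the interior of [A] therefore agree,
   so [C ∩ int A] is both open and closed. Applied to basic open sets this shrinks every basic
   neighbourhood to a clopen one, so rim-C spaces are zero-dimensional; conversely clopen sets
   have empty boundary, and the empty set is a C-set. *)

From Stdlib Require Import Classical FunctionalExtensionality PropExtensionality.

Section Topology.
Variable X : TopSpace.

Lemma is_open_ext (U V : X -> Prop) :
  is_open X U -> (forall x, U x <-> V x) -> is_open X V.
Proof.
  intros HU HUV. replace V with U; [exact HU|].
  apply functional_extensionality; intro x; apply propositional_extensionality; auto.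
Qed.

Lemma is_closed_ext (U V : X -> Prop) :
  is_closed X U -> (forall x, U x <-> V x) -> is_closed X V.
Proof.
  intros HU HUV. apply (is_open_ext _ _ HU). intro x; rewrite (HUV x); tauto.
Qed.

Lemma is_open_union2 (U V : X -> Prop) :
  is_open X U -> is_open X V -> is_open X (fun x => U x \/ V x).
Proof.
  intros HU HV.
  apply (is_open_ext _ _ (open_union X (fun W => W = U \/ W = V) ltac:(intros W [-> | ->]; auto))).
  intro x; split.
  - intros [W [[-> | ->] Wx]]; auto.
  - intros [Ux | Vx]; eauto.
Qed.

Lemma is_closed_inter (U V : X -> Prop) :
  is_closed X U -> is_closed X V -> is_closed X (fun x => U x /\ V x).
Proof.
  intros HU HV. apply (is_open_ext _ _ (is_open_union2 _ _ HU HV)).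
  intro x; tauto.
Qed.

Lemma is_clopen_compl (C : X -> Prop) : is_clopen X C -> is_clopen X (fun x => ~ C x).
Proof.
  intros [HCo HCc]. split; [exact HCc|].
  apply (is_open_ext _ _ HCo). intro x; split; [tauto | apply NNPP].
Qed.

Lemma is_clopen_empty : is_clopen X (fun _ => False).
Proof.
  split.
  - apply (is_open_ext _ _ (open_union X (fun _ => False) ltac:(intros; contradiction))).
    intro x; split; [intros [U [[] _]] | tauto].
  - apply (is_open_ext _ _ (open_full X)); intro x; tauto.
Qed.

Lemma interior_open (A : X -> Prop) : is_open X (interior X A).
Proof.
  apply (is_open_ext _ _
    (open_union X (fun U => is_open X U /\ (forall y, U y -> A y)) ltac:(intros U HU; exact (proj1 HU)))).
  intro x; split.
  - intros [U [[HU UA] Ux]]; exists U; auto.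
  - intros [U [HU [UA Ux]]]; exists U; auto.
Qed.

Lemma open_sub_interior (U : X -> Prop) x : is_open X U -> U x -> interior X U x.
Proof. intros HU Ux; exists U; auto. Qed.

Lemma interior_sub_closure (A : X -> Prop) x : interior X A x -> closure X A x.
Proof. intros [U [_ [UA Ux]]] W _ Wx; exists x; auto. Qed.

Lemma closure_closed (A : X -> Prop) : is_closed X (closure X A).
Proof.
  apply (is_open_ext _ _
    (open_union X (fun U => is_open X U /\ (forall y, U y -> ~ A y)) ltac:(intros U HU; exact (proj1 HU)))).
  intro x; split.
  - intros [U [[HU UnA] Ux]] Hcl.
    destruct (Hcl U HU Ux) as [y [Uy Ay]]. exact (UnA y Uy Ay).
  - intro Hncl. apply not_all_ex_not in Hncl as [U Hncl].
    apply imply_to_and in Hncl as [HU Hncl]. apply imply_to_and in Hncl as [Ux Hncl].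
    exists U; repeat split; auto.
    intros y Uy Ay; apply Hncl; eauto.
Qed.

Lemma closed_closure_sub (C : X -> Prop) y : is_closed X C -> closure X C y -> C y.
Proof.
  intros HC Hcl. apply NNPP; intro nCy.
  destruct (Hcl _ HC nCy) as [z [nCz Cz]]; auto.
Qed.

Lemma closure_off_boundary (A : X -> Prop) y :
  ~ boundary X A y -> closure X A y -> interior X A y.
Proof. intros Hnb Hcl. apply NNPP; intro Hni. apply Hnb; split; auto. Qed.

Lemma boundary_clopen_empty (V : X -> Prop) y : is_clopen X V -> ~ boundary X V y.
Proof.
  intros [HVo HVc] [Hcl Hni].
  apply Hni, open_sub_interior, closed_closure_sub; auto.
Qed.

Lemma is_Cset_empty (S : X -> Prop) : (forall y, ~ S y) -> is_Cset X S.
Proof.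
  intro HS. exists (fun W => W = (fun _ => False)). split.
  - intros C ->; exact is_clopen_empty.
  - intro x; split; [intro Sx; destruct (HS x Sx) | intro H; destruct (H _ eq_refl)].
Qed.

Lemma Cset_separate (S : X -> Prop) x :
  is_Cset X S -> ~ S x -> exists C, is_clopen X C /\ C x /\ (forall y, C y -> ~ S y).
Proof.
  intros [F [HF HSF]] nSx.
  rewrite HSF in nSx. apply not_all_ex_not in nSx as [C0 nSx].
  apply imply_to_and in nSx as [FC0 nC0x].
  exists (fun y => ~ C0 y); split; [|split].
  - exact (is_clopen_compl _ (HF C0 FC0)).
  - exact nC0x.
  - intros y nC0y Sy. exact (nC0y (proj1 (HSF y) Sy C0 FC0)).
Qed.

Lemma clopen_nbhd_off_Cset_boundary (A : X -> Prop) x :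
  interior X A x -> is_Cset X (boundary X A) ->
  exists C : X -> Prop,
    is_clopen X C /\ C x /\
    (forall y, C y -> ~ boundary X A y) /\
    (forall y, (C y /\ interior X A y) <-> (C y /\ closure X A y)) /\
    is_clopen X (fun y => C y /\ interior X A y).
Proof.
  intros Hx HbA.
  assert (nbx : ~ boundary X A x) by (intros [_ Hni]; exact (Hni Hx)).
  destruct (Cset_separate _ _ HbA nbx) as [C [HC [Cx Cnb]]].
  assert (HCA : forall y, (C y /\ interior X A y) <-> (C y /\ closure X A y)).
  { intro y; split; intros [Cy HA]; split; auto.
    - exact (interior_sub_closure _ _ HA).
    - exact (closure_off_boundary _ _ (Cnb y Cy) HA). }
  exists C; split; [exact HC | split; [exact Cx | split; [exact Cnb | split; [exact HCA | split]]]].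
  - exact (open_inter X _ _ (proj1 HC) (interior_open A)).
  - apply (is_closed_ext _ _ (is_closed_inter _ _ (proj2 HC) (closure_closed A))).
    intro y; symmetry; exact (HCA y).
Qed.

Lemma rim_C_zero_dimensional : rim_C X -> zero_dimensional X.
Proof.
  intros [B [[HBo HBnbhd] HBC]].
  exists (is_clopen X). split; [split | intros V HV; exact HV].
  - intros V [HV _]; exact HV.
  - intros U x HU Ux.
    destruct (HBnbhd U x HU Ux) as [V [BV [Vx VU]]].
    assert (HVx : interior X V x) by exact (open_sub_interior _ _ (HBo V BV) Vx).
    destruct (clopen_nbhd_off_Cset_boundary V x HVx (HBC V BV)) as [C [_ [Cx [_ [_ HCV]]]]].
    exists (fun y => C y /\ interior X V y); split; [exact HCV | split; [split; auto|]].
    intros y [_ [W [_ [WV Wy]]]]; auto.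
Qed.

Lemma zero_dimensional_rim_C : zero_dimensional X -> rim_C X.
Proof.
  intros [B [HB HBc]]. exists B; split; [exact HB|].
  intros V BV. apply is_Cset_empty. intro y; exact (boundary_clopen_empty V y (HBc V BV)).
Qed.

End Topology.

Theorem mainTheorem5 (X : TopSpace) (HsepX : separable X) (HmetX : metrizable X) :
  (forall (A : X -> Prop) (x : X),
      interior X A x ->
      is_Cset X (boundary X A) ->
      exists C : X -> Prop,
        is_clopen X C /\ C x /\
        (forall y, C y -> ~ boundary X A y) /\
        (forall y, (C y /\ interior X A y) <-> (C y /\ closure X A y)) /\
        is_clopen X (fun y => C y /\ interior X A y))
  /\ (rim_C X <-> zero_dimensional X).
Proof.
  split.
  - exact (clopen_nbhd_off_Cset_boundary X).
  - split; [exact (rim_C_zero_dimensional X) | exact (zero_dimensional_rim_C X)].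
Qed.
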